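(* Up to isomorphism, the complex exceptional Lie algebra $\mathfrak{e}_8$ has exactly two pairwise non-isomorphic $|3|$-gradings $\mathfrak{n}_{-3}\oplus\cdots\oplus\mathfrak{n}_3$: for $\Sigma=\{\alpha_2\}$ one has $\dim\mathfrak{n}_{-3}=8$, $\dim\mathfrak{n}_{-2}=28$, $\dim\mathfrak{n}_{-1}=56$; for $\Sigma=\{\alpha_7\}$ one has $\dim\mathfrak{n}_{-3}=2$, $\dim\mathfrak{n}_{-2}=27$, $\dim\mathfrak{n}_{-1}=54$.
   Context: Bourbaki labeling of $\mathfrak{e}_8$: Dynkin diagram the chain $\alpha_1-\alpha_3-\alpha_4-\alpha_5-\alpha_6-\alpha_7-\alpha_8$ with $\alpha_2$ attached to $\alpha_4$; highest root $2\alpha_1+3\alpha_2+4\alpha_3+6\alpha_4+5\alpha_5+4\alpha_6+3\alpha_7+2\alpha_8$. For a root $\alpha=\sum a_l\alpha_l$ and a subset $\Sigma$ of simple roots, $ht_\Sigma(\alpha)=\sum_{\alpha_l\in\Sigma}a_l$; the grading associated to $\Sigma$ is $\mathfrak{n}_m=\bigoplus_{ht_\Sigma(\alpha)=m}\mathfrak{g}_\alpha$ ($m\ne0$), $\mathfrak{n}_0=\mathfrak{h}\oplus\bigoplus_{ht_\Sigma(\alpha)=0}\mathfrak{g}_\alpha$. The $|3|$-gradings are those associated to subsets $\Sigma$ for which the highest root has $\Sigma$-height exactly $3$; isomorphism of gradings means isomorphism of graded Lie algebras. *)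

From mathcomp Require Import all_boot all_order all_algebra.
Set Implicit Arguments. Unset Strict Implicit. Unset Printing Implicit Defensive.
Import Order.TTheory GRing.Theory Num.Theory.
Local Open Scope ring_scope.

(* Simple root alpha_l (l = 1..8) is the ordinal l-1 : 'I_8. *)
Definition alpha (l : nat) : 'I_8 := inord l.-1.

(* Edges of the Bourbaki E8 Dynkin diagram:
   1-3, 3-4, 4-5, 5-6, 6-7, 7-8, 2-4 (Bourbaki labels). *)
Definition e8_edge (l m : nat) : bool :=
  [|| (l == 1) && (m == 3), (l == 3) && (m == 4), (l == 4) && (m == 5),
      (l == 5) && (m == 6), (l == 6) && (m == 7), (l == 7) && (m == 8)
    | (l == 2) && (m == 4)]%N.

Definition cartan (i j : 'I_8) : int :=
  if i == j then 2
  else if e8_edge i.+1 j.+1 || e8_edge j.+1 i.+1 then -1 else 0.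

(* A vector of the root lattice, in coordinates w.r.t. the simple roots. *)
Definition rvec := {ffun 'I_8 -> int}.

Definition simple_root (i : 'I_8) : rvec := [ffun j => if j == i then 1 else 0].

Definition refl (i : 'I_8) (v : rvec) : rvec :=
  [ffun j => if j == i then v j - \sum_(k < 8) v k * cartan k i else v j].

Inductive IsRoot : rvec -> Prop :=
| root_simple : forall i, IsRoot (simple_root i)
| root_refl : forall i v, IsRoot v -> IsRoot (refl i v).

Definition highest_root : rvec :=
  [ffun j : 'I_8 => nth 0 [:: 2; 3; 4; 6; 5; 4; 3; 2] j].

Definition htS (S : {set 'I_8}) (v : rvec) : int := \sum_(l in S) v l.

Definition is_3grading (S : {set 'I_8}) : Prop := htS S highest_root = 3.

(* dim n_m = k for m <> 0: number of roots of Sigma-height m equals k. *)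
Definition dim_n (S : {set 'I_8}) (m : int) (k : nat) : Prop :=
  exists s : seq rvec, [/\ uniq s, size s = k &
     forall v, v \in s <-> (IsRoot v /\ htS S v = m)].

(* We compute this
   orbit as an explicit list of 240 coefficient vectors, by a worklist closure
   under the simple reflections, and check by evaluation that the list is closed
   under them; this identifies it with the inductively defined roots, and the
   dimensions of the graded pieces become counts over the list.  For the
   gradings: every coefficient of the highest root is at least 2, so Sigma-height
   3 forces Sigma to be a single simple root of coefficient 3, i.e. alpha_2 or
   alpha_7. *)

From mathcomp Require Import all_boot all_order all_algebra.
Set Implicit Arguments. Unset Strict Implicit. Unset Printing Implicit Defensive.
Import Order.TTheory GRing.Theory Num.Theory.
Local Open Scope ring_scope.

Section Orbit.

Variables (T : eqType) (I : eqType) (gens : seq I) (act : I -> T -> T).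

Fixpoint orbit_from (n : nat) (seen frontier : seq T) : seq T :=
  if n is n'.+1 then
    let fresh := undup [seq y <- [seq act i x | x <- frontier, i <- gens] | y \notin seen] in
    orbit_from n' (seen ++ fresh) fresh
  else seen.

Lemma orbit_from_ind (P : T -> Prop) n seen frontier :
  (forall i x, i \in gens -> P x -> P (act i x)) ->
  (forall x, x \in seen -> P x) -> {subset frontier <= seen} ->
  forall x, x \in orbit_from n seen frontier -> P x.
Proof.
move=> Pact; elim: n seen frontier => [|n IHn] seen frontier //= Pseen sub_fs.
have Pfresh y :
    y \in undup [seq y <- [seq act i x | x <- frontier, i <- gens] | y \notin seen] -> P y.
  rewrite mem_undup mem_filter => /andP[_ /allpairsP[[x i] /= [/sub_fs/Pseen Px gi ->]]].
  exact: Pact.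
apply: IHn => [y|y fy]; last by rewrite mem_cat fy orbT.
by rewrite mem_cat => /orP[/Pseen|/Pfresh].
Qed.

End Orbit.

Lemma set1_of_small_sum (T : finType) (S : {set T}) (c : T -> int) (b : int) :
  0 <= b -> (forall i, b <= c i) -> 0 < \sum_(i in S) c i < b *+ 2 ->
  exists i, S = [set i].
Proof.
move=> b_ge0 c_geb /andP[sum_gt0 sum_lt2b].
have [i Si] : exists i, i \in S.
  apply/set0Pn; apply: contraTneq sum_gt0 => ->; by rewrite big_set0 ltxx.
exists i; apply/eqP; rewrite eqEsubset sub1set Si andbT; apply/subsetP => j Sj.
rewrite inE; apply: contraTT sum_lt2b => neq_ji; rewrite -leNgt.
rewrite (bigD1 i) // (bigD1 j) /=; last by rewrite Sj.
rewrite addrA -[b *+ 2]addr0 mulr2n lerD ?lerD //.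
by apply: sumr_ge0 => k _; apply: le_trans (c_geb k).
Qed.

Lemma htS_set1 i v : htS [set i] v = v i.
Proof. exact: big_set1. Qed.

Lemma alphaK n : (n <= 8)%N -> alpha n = n.-1 :> nat.
Proof. by case: n => [|n] lt_n8; rewrite /alpha inordK. Qed.

Lemma highest_root_ge2 i : 2 <= highest_root i.
Proof. by rewrite ffunE; case: i => [[|[|[|[|[|[|[|[|//]]]]]]]]]. Qed.

Lemma highest_root_eq3 i : (highest_root i == 3) = (i \in [set alpha 2; alpha 7]).
Proof.
rewrite ffunE !inE -!(inj_eq val_inj) /= !alphaK //.
by case: i => [[|[|[|[|[|[|[|[|//]]]]]]]]].
Qed.

Lemma is_3grading_set1 i : is_3grading [set i] <-> highest_root i = 3.
Proof. by rewrite /is_3grading htS_set1. Qed.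

Lemma is_3gradingE S : is_3grading S <-> S = [set alpha 2] \/ S = [set alpha 7].
Proof.
split=> [S3|]; last first.
  by case=> ->; apply/is_3grading_set1/eqP; rewrite highest_root_eq3 !inE eqxx ?orbT.
have [i S_i] : exists i, S = [set i].
  apply: (set1_of_small_sum (b := 2)) => //; first exact: highest_root_ge2.
  by move: S3; rewrite /is_3grading /htS => ->.
move: S3; rewrite S_i => /is_3grading_set1/eqP.
by rewrite highest_root_eq3 !inE => /orP[] /eqP ->; [left|right].
Qed.

(* Evaluation gets stuck on enumerations of ['I_8] and on big operators, so the
   orbit is computed on coefficient lists indexed by [nat]. *)
Definition cartan_nat (a b : nat) : int :=
  if (a == b)%N then 2 else if e8_edge a.+1 b.+1 || e8_edge b.+1 a.+1 then -1 else 0.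

Definition seq_pairing (l : seq int) (i : nat) : int :=
  foldr (fun k acc => l`_k * cartan_nat k i + acc) 0 (iota 0 8).

Definition seq_refl (i : nat) (l : seq int) : seq int :=
  [seq if j == i then l`_j - seq_pairing l i else l`_j | j <- iota 0 8].

Definition seq_simple_root (i : nat) : seq int :=
  [seq if j == i then 1 else 0 | j <- iota 0 8].

(* 29 rounds suffice (the highest root has height 29), but nothing relies on
   it: closedness is checked in [e8_root_seqs_closed]. *)
Definition e8_root_seqs : seq (seq int) :=
  let simple := [seq seq_simple_root i | i <- iota 0 8] in
  orbit_from (iota 0 8) seq_refl 29 simple simple.

Definition rvec_of_seq (l : seq int) : rvec := [ffun i : 'I_8 => l`_i].

Lemma refl_rvec_of_seq (i : 'I_8) l :
  refl i (rvec_of_seq l) = rvec_of_seq (seq_refl i l).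
Proof.
apply/ffunP => j; rewrite !ffunE (nth_map 0%N) ?size_iota // nth_iota // add0n.
suff -> : \sum_(k < 8) rvec_of_seq l k * cartan k i = seq_pairing l i by [].
rewrite (eq_bigr (fun k : 'I_8 => l`_k * cartan_nat k i)) => [|k _]; last by rewrite ffunE.
by rewrite -(big_mkord xpredT (fun k => l`_k * cartan_nat k i)) unlock.
Qed.

Lemma simple_root_rvec_of_seq (i : 'I_8) :
  simple_root i = rvec_of_seq (seq_simple_root i).
Proof.
by apply/ffunP => j; rewrite !ffunE (nth_map 0%N) ?size_iota // nth_iota // add0n.
Qed.

Lemma rvec_of_seq_inj : {in [pred l : seq int | size l == 8%N] &, injective rvec_of_seq}.
Proof.
move=> a b /eqP sa /eqP sb /ffunP eq_ab.
apply: (@eq_from_nth _ 0) => [|k]; first by rewrite sa sb.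
by rewrite sa => lt_k8; have := eq_ab (Ordinal lt_k8); rewrite !ffunE.
Qed.

Lemma e8_root_seqs_closed :
  all (fun l => all (fun i => seq_refl i l \in e8_root_seqs) (iota 0 8)) e8_root_seqs.
Proof. by vm_compute. Qed.

Lemma simple_root_seqs_in_e8_root_seqs :
  all (fun i => seq_simple_root i \in e8_root_seqs) (iota 0 8).
Proof. by vm_compute. Qed.

Lemma uniq_e8_root_seqs : uniq e8_root_seqs.
Proof. by vm_compute. Qed.

Lemma IsRoot_of_e8_root_seq l : l \in e8_root_seqs -> IsRoot (rvec_of_seq l).
Proof.
apply: (@orbit_from_ind _ _ _ _ (fun l => IsRoot (rvec_of_seq l))) => [i x|x|x].
- rewrite mem_iota add0n => lt_i8; rewrite -[i]/(nat_of_ord (Ordinal lt_i8)).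
  by rewrite -refl_rvec_of_seq; exact: root_refl.
- case/mapP=> i; rewrite mem_iota add0n => lt_i8 ->.
  by rewrite -[i]/(nat_of_ord (Ordinal lt_i8)) -simple_root_rvec_of_seq; exact: root_simple.
- by [].
Qed.

Definition e8_roots : seq rvec := map rvec_of_seq e8_root_seqs.

Lemma mem_e8_roots v : IsRoot v <-> v \in e8_roots.
Proof.
rewrite /e8_roots; split; last by case/mapP=> l /IsRoot_of_e8_root_seq Rl ->.
elim=> [i|i _ _ /mapP[l l_root ->]].
  rewrite simple_root_rvec_of_seq; apply: map_f.
  by apply: (allP simple_root_seqs_in_e8_root_seqs); rewrite mem_iota add0n ltn_ord.
rewrite refl_rvec_of_seq; apply: map_f.
by apply: (allP (allP e8_root_seqs_closed l l_root)); rewrite mem_iota add0n ltn_ord.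
Qed.

Lemma size_e8_root_seq l : l \in e8_root_seqs -> size l = 8%N.
Proof.
apply: (@orbit_from_ind _ _ _ _ (fun l => size l = 8%N)) => [i x _ _|x /mapP[i _ ->]|].
- by rewrite size_map size_iota.
- by rewrite size_map size_iota.
- by [].
Qed.

Lemma uniq_e8_roots : uniq e8_roots.
Proof.
rewrite map_inj_in_uniq; first exact: uniq_e8_root_seqs.
by move=> a b /size_e8_root_seq/eqP a8 /size_e8_root_seq/eqP b8; apply: rvec_of_seq_inj.
Qed.

Lemma dim_n_count S m : dim_n S m (count (fun v => htS S v == m) e8_roots).
Proof.
exists [seq v <- e8_roots | htS S v == m]; split.
- exact: filter_uniq uniq_e8_roots.
- by rewrite size_filter.
- move=> v; rewrite mem_filter.
  split=> [/andP[/eqP hv /mem_e8_roots Rv] | [/mem_e8_roots Rv hv]]; first by split.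
  by rewrite hv eqxx.
Qed.

Lemma dim_n_alpha n m k : (n <= 8)%N ->
  count (fun l => l`_n.-1 == m) e8_root_seqs = k -> dim_n [set alpha n] m k.
Proof.
move=> le_n8 <-; have := dim_n_count [set alpha n] m; rewrite count_map.
by under eq_count => l do rewrite /= htS_set1 ffunE alphaK //.
Qed.

Theorem proposition2p10 :
  (forall S : {set 'I_8},
      is_3grading S <-> (S = [set alpha 2] \/ S = [set alpha 7])) /\
  (dim_n [set alpha 2] (-3) 8 /\ dim_n [set alpha 2] (-2) 28 /\
   dim_n [set alpha 2] (-1) 56) /\
  (dim_n [set alpha 7] (-3) 2 /\ dim_n [set alpha 7] (-2) 27 /\
   dim_n [set alpha 7] (-1) 54).
Proof.
split; first exact: is_3gradingE.
by split; (split; [|split]); (apply: dim_n_alpha; [by [] | by vm_compute]).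
Qed.
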